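(* Let $S \subseteq I_3^d$ be a nonempty set, let $x^1, x^2, x^3 : S \to \{1,2,3\}$ be functions such that for some $\alpha \in S$ the values $x^1(\alpha), x^2(\alpha), x^3(\alpha)$ are pairwise distinct, and for $k=1,2,3$ let $A_k$ be a $(d+1)$-dimensional polystochastic matrix of order $3$ with $\mathrm{supp}(A_k) = I_3^{d+1} \setminus \{(\beta, x^k(\beta)) : \beta \in S\}$. Then there is no vertex $B$ of $\Omega_3^{d+1}$ with $\mathrm{supp}(B) \subseteq \mathrm{supp}(A_1) \cap \mathrm{supp}(A_2) \cap \mathrm{supp}(A_3)$. Consequently, if $\mathcal{A}$ is a family of $(d+1)$-dimensional polystochastic matrices of order $3$ of this form indexed by a set $C$ of functions $S \to \{1,2,3\}$ such that any three distinct members of $C$ take pairwise distinct values at some $\alpha \in S$, then $\Omega_3^{d+1}$ has at least $|C|/2$ vertices.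
   Context: $I_3^m = \{1,2,3\}^m$; $(\beta,j)$ denotes the index in $I_3^{d+1}$ obtained by appending $j$ to $\beta \in I_3^d$. A $m$-dimensional matrix of order $3$ is an array indexed by $I_3^m$; a line is the set of entries obtained by fixing all but one coordinate; a matrix is polystochastic if its entries are nonnegative and each line sums to $1$; $\mathrm{supp}(A)=\{\alpha : a_\alpha \ne 0\}$. $\Omega_3^{m}$ is the polytope of $m$-dimensional polystochastic matrices of order $3$; vertices are its extreme points. Every polystochastic matrix is a convex combination with positive coefficients of vertices whose supports are contained in its support. *)

From mathcomp Require Import all_boot all_order all_algebra.
Set Implicit Arguments. Unset Strict Implicit. Unset Printing Implicit Defensive.
Import Order.TTheory GRing.Theory Num.Theory.
Local Open Scope ring_scope.

(* I_3^m : indices with coordinates in 'I_3 (0,1,2 stand for 1,2,3). *)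
Definition idx (m : nat) := {ffun 'I_m -> 'I_3}.

Definition mat (R : Type) (m : nat) := {ffun idx m -> R}.

(* (beta, j) : append j as last coordinate. *)
Definition app (d : nat) (beta : idx d) (j : 'I_3) : idx d.+1 :=
  [ffun i : 'I_d.+1 => if unlift ord_max i is Some i' then beta i' else j].

(* alpha with coordinate i replaced by j; {setc alpha i j | j} is a line. *)
Definition setc (m : nat) (alpha : idx m) (i : 'I_m) (j : 'I_3) : idx m :=
  [ffun k => if k == i then j else alpha k].

Definition polystochastic (R : numDomainType) (m : nat) (A : mat R m) : Prop :=
  (forall alpha, 0 <= A alpha) /\
  (forall (alpha : idx m) (i : 'I_m), \sum_(j : 'I_3) A (setc alpha i j) = 1).

Definition supp (R : numDomainType) (m : nat) (A : mat R m) : {set idx m} :=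
  [set alpha | A alpha != 0].

Definition vertex (R : numDomainType) (m : nat) (A : mat R m) : Prop :=
  polystochastic A /\
  forall (B C : mat R m) (t : R), polystochastic B -> polystochastic C ->
    0 < t -> t < 1 -> (forall alpha, A alpha = t * B alpha + (1 - t) * C alpha) ->
    B = A /\ C = A.

Definition elS (d : nat) (S : {set idx d}) := {beta : idx d | beta \in S}.

Definition graph (d : nat) (S : {set idx d}) (x : {ffun elS S -> 'I_3}) : {set idx d.+1} :=
  [set app (val b) (x b) | b : elS S].

From mathcomp Require Import all_boot all_order all_algebra.
From Stdlib Require Import Classical.
Set Implicit Arguments. Unset Strict Implicit. Unset Printing Implicit Defensive.
Import Order.TTheory GRing.Theory Num.Theory.
Local Open Scope ring_scope.

(* Every polystochastic matrix lies above a vertex: if B is not a vertex, it is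
   a proper convex combination of polystochastic matrices supported in supp B,
   and moving from B along their difference until an entry vanishes yields a
   polystochastic matrix of strictly smaller support.
   A polystochastic matrix whose support avoids three graphs taking pairwise
   distinct values at alpha vanishes on the whole line {(alpha, j) | j}, whose
   sum must be 1. Hence a vertex below A_c lies below at most two of the A_c,
   and choosing a vertex below each A_c is an at most two-to-one map. *)

Lemma convex_comb_eq0 (R : numDomainType) (t p q : R) :
  0 < t -> t < 1 -> 0 <= p -> 0 <= q -> t * p + (1 - t) * q = 0 -> p = 0 /\ q = 0.
Proof.
move=> t0 t1 p0 q0 /eqP; rewrite paddr_eq0 ?mulr_ge0 ?subr_ge0 ?(ltW t0) ?(ltW t1) //.
by rewrite !mulf_eq0 (gt_eqF t0) subr_eq0 (gt_eqF t1) => /andP[/eqP-> /eqP->].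
Qed.

Section Polystochastic.
Variables (R : realFieldType) (m : nat).
Implicit Types (A B P Q : mat R m).

Lemma supp_convex_comb B P Q (t : R) :
  polystochastic P -> polystochastic Q -> 0 < t -> t < 1 ->
  (forall a, B a = t * P a + (1 - t) * Q a) ->
  supp P \subset supp B /\ supp Q \subset supp B.
Proof.
move=> [P0 _] [Q0 _] t0 t1 eB.
have PQ0 a : B a = 0 -> P a = 0 /\ Q a = 0.
  by move=> Ba0; apply: (convex_comb_eq0 t0 t1 (P0 a) (Q0 a)); rewrite -eB.
by split; apply/subsetP => a; rewrite !inE; apply: contraNN => /eqP/PQ0[Pa Qa];
  rewrite ?Pa ?Qa.
Qed.

(* Ratio test: l = min {B a / D a | D a > 0}, attained at b, is the largest
   step keeping B - l D nonnegative, and it kills the entry at b. *)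
Lemma polystochastic_shrink_supp_dir B (D : idx m -> R) :
  polystochastic B -> (forall a i, \sum_j D (setc a i j) = 0) ->
  (forall a, B a = 0 -> D a = 0) -> (exists a, 0 < D a) ->
  exists E : mat R m, polystochastic E /\ supp E \proper supp B.
Proof.
move=> [B0 B1] D_line DB [a0 Da0].
have [b Db bmin] := @arg_minP _ _ _ a0 (fun b => 0 < D b) (fun b => B b / D b) Da0.
have Bb : 0 < B b.
  by rewrite lt_def B0 andbT; apply: contraTneq Db => /DB ->; rewrite ltxx.
pose l := B b / D b.
exists [ffun a => B a - l * D a]; split; first split.
- move=> a; rewrite ffunE subr_ge0.
  have [Da|Da] := ltP 0 (D a); first by rewrite -ler_pdivlMr // bmin.
  by apply: le_trans (B0 a); rewrite pmulr_rle0 ?divr_gt0.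
- move=> a i; under eq_bigr do rewrite ffunE.
  by rewrite sumrB B1 -mulr_sumr D_line mulr0 subr0.
rewrite properEneq; apply/andP; split.
  apply/eqP => /setP /(_ b); rewrite !inE ffunE /l (divfK (lt0r_neq0 Db)).
  by rewrite subrr eqxx (gt_eqF Bb).
apply/subsetP => a; rewrite !inE; apply: contraNN => /eqP Ba0.
by rewrite ffunE Ba0 (DB _ Ba0) mulr0 subrr.
Qed.

Lemma polystochastic_shrink_supp B P :
  polystochastic B -> polystochastic P -> P != B -> supp P \subset supp B ->
  exists E : mat R m, polystochastic E /\ supp E \proper supp B.
Proof.
move=> PB [_ P1] nPB sPB.
have PB0 a : B a = 0 -> P a = 0.
  move=> Ba0; apply/eqP; move: (subsetP sPB a); rewrite !inE Ba0 eqxx.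
  by case: (P a == 0) => // /(_ isT).
have [a0 neq_a0] : exists a0, P a0 - B a0 != 0.
  apply/existsP; apply: contraNT nPB => /existsPn eqPB.
  by apply/eqP/ffunP => a; apply/eqP; rewrite -subr_eq0; apply/negPn.
apply: (@polystochastic_shrink_supp_dir B (fun a => Num.sg (P a0 - B a0) * (P a - B a)) PB).
- by move=> a i; rewrite -mulr_sumr sumrB P1 (proj2 PB) subrr mulr0.
- by move=> a Ba0; rewrite (PB0 a Ba0) Ba0 subrr mulr0.
- by exists a0; rewrite -normrEsg normr_gt0.
Qed.

Lemma minimal_supp_vertex B :
  polystochastic B ->
  ~ (exists E : mat R m, polystochastic E /\ supp E \proper supp B) -> vertex B.
Proof.
move=> PB minB; split=> // P Q t PP PQ t0 t1 eB.
have [sPB sQB] := supp_convex_comb PP PQ t0 t1 eB.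
have eq_B X : polystochastic X -> supp X \subset supp B -> X = B.
  move=> PX sXB; have [//|nXB] := eqVneq X B.
  by case: minB; apply: polystochastic_shrink_supp PB PX nXB sXB.
by split; apply: eq_B.
Qed.

Lemma exists_vertex_sub_supp A :
  polystochastic A -> exists B : mat R m, vertex B /\ supp B \subset supp A.
Proof.
have [n] := ubnP #|supp A|; elim: n A => // n IH A; rewrite ltnS => ltA PA.
have [[E [PE sEA]]|minA] :=
  classic (exists E : mat R m, polystochastic E /\ supp E \proper supp A).
  have [B [VB sBE]] := IH E (leq_trans (proper_card sEA) ltA) PE.
  by exists B; split=> //; apply: subset_trans sBE (proper_sub sEA).
by exists A; split; [apply: minimal_supp_vertex|].
Qed.

End Polystochastic.

Lemma ord3_distinct_cover (u v w j : 'I_3) :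
  u != v -> u != w -> v != w -> [|| j == u, j == v | j == w].
Proof. by move: u v w j; do 4!case=> [[|[|[|?]]] ?]. Qed.

Lemma setc_app_last d (b : idx d) (j0 j : 'I_3) : setc (app b j0) ord_max j = app b j.
Proof.
apply/ffunP => k; rewrite !ffunE.
case: (unliftP ord_max k) => [k'|] ->; last by rewrite eqxx.
by rewrite eq_sym (negbTE (neq_lift _ _)).
Qed.

Lemma app_mem_graph d (S : {set idx d}) (x : {ffun elS S -> 'I_3}) (a : elS S) :
  app (val a) (x a) \in graph x.
Proof. by apply/imsetP; exists a. Qed.

Lemma polystochastic_meets_graphs (R : realFieldType) d (S : {set idx d})
    (x0 x1 x2 : {ffun elS S -> 'I_3}) (a : elS S) (B : mat R d.+1) :
  polystochastic B -> x0 a != x1 a -> x0 a != x2 a -> x1 a != x2 a ->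
  ~~ (supp B \subset ~: graph x0 :&: ~: graph x1 :&: ~: graph x2).
Proof.
move=> [_ B1] n01 n02 n12; apply/negP => sB.
have Bline j : B (app (val a) j) = 0.
  apply/eqP; apply: contraT => Bj.
  have := subsetP sB (app (val a) j); rewrite !inE Bj => /(_ isT).
  case/or3P: (ord3_distinct_cover j n01 n02 n12) => /eqP->;
  by rewrite app_mem_graph ?andbF.
move: (B1 (app (val a) (x0 a)) ord_max).
rewrite (eq_bigr (fun=> 0)) => [|j _]; last by rewrite setc_app_last Bline.
by rewrite big1 // => /eqP; rewrite eq_sym oner_eq0.
Qed.

Lemma size_le_mul_undup (T : eqType) (s : seq T) n :
  (forall y, (count_mem y s <= n)%N) -> (size s <= n * size (undup s))%N.
Proof.
move=> le_cnt; rewrite -(perm_size (perm_count_undup s)) size_flatten /shape -map_comp.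
by elim: (undup s) => //= y r IH; rewrite mulnS leq_add // size_nseq.
Qed.

Lemma card_le_double_image (T : finType) (U : eqType) (C : {set T}) (f : T -> U) :
  (forall y, #|[set c in C | f c == y]| <= 2)%N ->
  (#|C| <= 2 * size (undup [seq f c | c <- enum C]))%N.
Proof.
move=> fiber2; rewrite cardE -(size_map f); apply: size_le_mul_undup => y.
rewrite count_map (leq_trans _ (fiber2 y)) // cardE /enum_mem size_filter.
by rewrite !count_filter; apply/eq_leq/eq_count => c; rewrite !inE andbC.
Qed.

Theorem mainTheorem10 (R : realFieldType) (d : nat) :
  (forall (S : {set idx d}) (x : 'I_3 -> {ffun elS S -> 'I_3}) (A : 'I_3 -> mat R d.+1),
     S != set0 ->
     (exists a : elS S, [/\ x 0 a != x 1 a, x 0 a != x 2 a & x 1 a != x 2 a]) ->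
     (forall k, polystochastic (A k) /\ supp (A k) = ~: graph (x k)) ->
     ~ exists B : mat R d.+1,
         vertex B /\ supp B \subset supp (A 0) :&: supp (A 1) :&: supp (A 2))
  /\
  (forall (S : {set idx d}) (C : {set {ffun elS S -> 'I_3}})
          (A : {ffun elS S -> 'I_3} -> mat R d.+1),
     S != set0 ->
     (forall c1 c2 c3, c1 \in C -> c2 \in C -> c3 \in C ->
        c1 != c2 -> c1 != c3 -> c2 != c3 ->
        exists a : elS S, [/\ c1 a != c2 a, c1 a != c3 a & c2 a != c3 a]) ->
     (forall c, c \in C -> polystochastic (A c) /\ supp (A c) = ~: graph c) ->
     exists V : seq (mat R d.+1),
       [/\ uniq V, (forall B, B \in V -> vertex B) & (#|C| <= 2 * size V)%N]).
Proof.
split=> [S x A _ [a [n01 n02 n12]] HA [B [[PB _]]]|S C A _ distinct3 HA].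
  rewrite (HA 0).2 (HA 1).2 (HA 2).2; apply/negP.
  exact: polystochastic_meets_graphs PB n01 n02 n12.
have vertex_below c :
    exists B : mat R d.+1, c \in C -> vertex B /\ supp B \subset supp (A c).
  have [cC|] := boolP (c \in C); last by exists (A c).
  by have [B ?] := exists_vertex_sub_supp (HA c cC).1; exists B.
have [f fP] := fin_all_exists vertex_below.
exists (undup [seq f c | c <- enum C]); split; first exact: undup_uniq.
  by move=> B; rewrite mem_undup => /mapP[c]; rewrite mem_enum => /fP[? _] ->.
apply: card_le_double_image => y; rewrite leqNgt; apply/card_gt2P.
move=> [c1 [c2 [c3 [[]]]]]; rewrite !inE.
move=> /andP[C1 /eqP f1] /andP[C2 /eqP f2] /andP[C3 /eqP f3] [n12 n23 n31].
have n13 : c1 != c3 by rewrite eq_sym.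
have [a [h12 h13 h23]] := distinct3 c1 c2 c3 C1 C2 C3 n12 n13 n23.
have [[[[PB _] s1] [_ s2]] [_ s3]] := (fP c1 C1, fP c2 C2, fP c3 C3).
rewrite f1 in PB s1; rewrite f2 in s2; rewrite f3 in s3.
apply: (negP (polystochastic_meets_graphs PB h12 h13 h23)).
by rewrite -(HA c1 C1).2 -(HA c2 C2).2 -(HA c3 C3).2 !subsetI s1 s2 s3.
Qed.
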